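(* Fix $b>0$ and consider, for $\varepsilon\in(-b,\infty)$, the functions $\alpha(\varepsilon),\beta(\varepsilon),\gamma(\varepsilon)$ defined in the context. Then: $\alpha$ and $\beta$ are strictly decreasing in $\varepsilon$; $\gamma$, $\gamma-\alpha-2\beta$, $\gamma-\alpha+2\beta$ and $\gamma-\alpha$ are strictly increasing in $\varepsilon$; $\alpha+\gamma$ has a unique minimum at $\varepsilon=0$. Moreover $\alpha(0)=\gamma(0)=1$ and $\beta(0)=0$ for every $b>0$.
   Context: With $t=(b+\varepsilon)/b$: $\alpha=-t^2+2t-\frac4t+\frac4{t^2}$, $\beta=-t^3+t^2+t-3+\frac2t$, $\gamma=t^4-t^2+2t-1$. (These are the entries of the matrix $P(b,\varepsilon,0)=\begin{pmatrix}\alpha&\beta\\-\beta&\gamma\end{pmatrix}$, where $P(b,\varepsilon,k)$ is a transfer matrix of the tight-binding model.) *)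

(* statement over an arbitrary real field R (the claims are
   purely algebraic/order-theoretic, so this generalizes the reals). *)
From mathcomp Require Import all_boot all_order all_algebra.
Set Implicit Arguments. Unset Strict Implicit. Unset Printing Implicit Defensive.
Import Order.TTheory GRing.Theory Num.Theory.
Local Open Scope ring_scope.

Definition tpar (R : realFieldType) (b eps : R) : R := (b + eps) / b.

Definition alpha (R : realFieldType) (b eps : R) : R :=
  let t := tpar b eps in - t ^+ 2 + 2 * t - 4 / t + 4 / t ^+ 2.

Definition beta (R : realFieldType) (b eps : R) : R :=
  let t := tpar b eps in - t ^+ 3 + t ^+ 2 + t - 3 + 2 / t.

Definition gamma (R : realFieldType) (b eps : R) : R :=
  let t := tpar b eps in t ^+ 4 - t ^+ 2 + 2 * t - 1.

Definition strictly_increasing_on (R : realFieldType) (b : R) (f : R -> R) : Prop :=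
  forall e1 e2 : R, - b < e1 -> e1 < e2 -> f e1 < f e2.

Definition strictly_decreasing_on (R : realFieldType) (b : R) (f : R -> R) : Prop :=
  forall e1 e2 : R, - b < e1 -> e1 < e2 -> f e2 < f e1.

From mathcomp Require Import all_boot all_order all_algebra.
From mathcomp Require Import ring lra.
Set Implicit Arguments. Unset Strict Implicit. Unset Printing Implicit Defensive.
Import Order.TTheory GRing.Theory Num.Theory.
Local Open Scope ring_scope.

(* The substitution t = (b + eps) / b maps (-b, +oo) increasingly onto (0, +oo),
   and eps = 0 to t = 1, so every claim is about a rational function f of t > 0.
   Up to sign, f y - f x = (y - x) q (x + y) (x y) for an explicit q, and q is
   positive on the region 0 < p, 4 p <= s^2 described by s = x + y, p = x y of
   positive x, y, by elementary estimates.  The minimum of alpha + gamma comes from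
   alpha + gamma = 2 + (t - 1)^2 (t^4 + 2t^3 + t^2 + 4t + 4) / t^2. *)

Section Monotonicity.
Variable R : realFieldType.
Implicit Types (f : R -> R) (q : R -> R -> R) (s p x y t : R).

Lemma homo_pos_of_slope f q :
  (forall s p, 0 < s -> 0 < p -> 4 * p <= s ^+ 2 -> 0 < q s p) ->
  (forall x y, 0 < x -> 0 < y -> f y - f x = (y - x) * q (x + y) (x * y)) ->
  {in Num.pos &, {homo f : x y / x < y}}.
Proof.
move=> q_gt0 slope x y; rewrite !posrE => x_gt0 y_gt0 lt_xy.
rewrite -subr_gt0 slope // mulr_gt0 ?subr_gt0 // q_gt0 ?addr_gt0 ?mulr_gt0 //.
by rewrite -subr_ge0 (_ : _ - _ = (x - y) ^+ 2) ?sqr_ge0 //; ring.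
Qed.

Lemma homo_pos_of_neg_slope f q :
  (forall s p, 0 < s -> 0 < p -> 4 * p <= s ^+ 2 -> 0 < q s p) ->
  (forall x y, 0 < x -> 0 < y -> f x - f y = (y - x) * q (x + y) (x * y)) ->
  {in Num.pos &, {homo f : x y /~ x < y}}.
Proof.
move=> q_gt0 slope x y x_pos y_pos lt_yx; rewrite -ltrN2.
apply: (homo_pos_of_slope (f := fun t => - f t) q_gt0) => // u v u_gt0 v_gt0.
by rewrite opprK addrC slope.
Qed.

Lemma alpha_slope_gt0 s p : 0 < s -> 0 < p -> 4 * p <= s ^+ 2 ->
  0 < (s - 2) * p ^+ 2 - 4 * p + 4 * s.
Proof.
move=> s_gt0 p_gt0 sp.
(* s (p^2 + 4) >= 2 sqrt(p) (p^2 + 4) > 2 p (p + 2), compared after squaring *)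
have lhs_gt0 : 0 < s * (p ^+ 2 + 4) by rewrite mulr_gt0 // addr_gt0 ?exprn_gt0.
have key : (2 * p * (p + 2)) ^+ 2 < (s * (p ^+ 2 + 4)) ^+ 2.
  have : 4 * p * (p ^+ 2 + 4) ^+ 2 <= (s * (p ^+ 2 + 4)) ^+ 2.
    by rewrite exprMn ler_wpM2r ?sqr_ge0.
  suff : (2 * p * (p + 2)) ^+ 2 < 4 * p * (p ^+ 2 + 4) ^+ 2 by lra.
  nra.
have rhs_ge0 : 0 <= 2 * p * (p + 2) by rewrite !mulr_ge0 ?addr_ge0 ?ltW.
rewrite ltr_sqr ?nnegrE ?(ltW lhs_gt0) // in key.
lra.
Qed.

Lemma beta_slope_gt0 s p : 0 < s -> 0 < p -> 4 * p <= s ^+ 2 ->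
  0 < p * (s ^+ 2 - p - s - 1) + 2.
Proof.
move=> s_gt0 p_gt0 sp.
set m := s ^+ 2 - p - s - 1.
have m_lb : 3 * (s - 2) * (s + 2 / 3) <= 4 * m by rewrite /m; nra.
have [m_ge0 | m_lt0] := lerP 0 m; first by nra.
have p_lt1 : p < 1 by nra.
have : 0 <= (3 * s - 2) ^+ 2 by exact: sqr_ge0.
nra.
Qed.

Lemma gamma_slope_gt0 s p : 0 < s -> 0 < p -> 4 * p <= s ^+ 2 ->
  0 < s * (s ^+ 2 - 2 * p) - s + 2.
Proof.
move=> s_gt0 p_gt0 sp.
have : 0 <= s * (s ^+ 2 - 4 * p) by rewrite mulr_ge0 ?subr_ge0 // ltW.
have : 0 <= s * (s - 1) ^+ 2 by rewrite mulr_ge0 ?sqr_ge0 // ltW.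
have : 0 <= (4 * s - 3) ^+ 2 by exact: sqr_ge0.
nra.
Qed.

Lemma quartic_slope_gt0 s p : 0 < s -> 0 < p -> 4 * p <= s ^+ 2 ->
  0 < s ^+ 3 - 2 * s ^+ 2 + 2 * s - 2 * p * (s - 1).
Proof.
move=> s_gt0 p_gt0 sp.
have [s_le1 | s_gt1] := lerP s 1.
  have : 0 <= p * (1 - s) by rewrite mulr_ge0 ?subr_ge0 // ltW.
  have : 0 < s * ((s - 1) ^+ 2 + 1) by rewrite mulr_gt0 // ltr_pwDr ?sqr_ge0.
  nra.
have : 0 <= (s ^+ 2 - 4 * p) * (s - 1) by rewrite mulr_ge0 ?subr_ge0 // ltW.
have : 0 < s * ((2 * s - 3) ^+ 2 + 7) by rewrite mulr_gt0 // ltr_pwDr ?sqr_ge0.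
nra.
Qed.

Lemma hyperbolic_slope_gt0 s p : 0 < s -> 0 < p -> 4 * p <= s ^+ 2 ->
  0 < p ^+ 2 - 4 * p + 2 * s.
Proof.
move=> s_gt0 p_gt0 sp.
have [s_le2 | s_gt2] := lerP s 2; last first.
  have : 0 <= (p - 2) ^+ 2 by exact: sqr_ge0.
  nra.
have : 0 <= (s ^+ 2 - 4 * p) * (16 - 4 * p - s ^+ 2).
  by rewrite mulr_ge0 ?subr_ge0 //; nra.
have : 0 < s * (8 - s) by rewrite mulr_gt0 ?subr_gt0 //; lra.
have : 0 <= s ^+ 4 by rewrite exprn_ge0 // ltW.
nra.
Qed.

Definition alpha_t t := - t ^+ 2 + 2 * t - 4 / t + 4 / t ^+ 2.
Definition beta_t t := - t ^+ 3 + t ^+ 2 + t - 3 + 2 / t.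
Definition gamma_t t := t ^+ 4 - t ^+ 2 + 2 * t - 1.

Lemma alpha_t_decreasing : {in Num.pos &, {homo alpha_t : x y /~ x < y}}.
Proof.
apply: (homo_pos_of_neg_slope
  (q := fun s p => ((s - 2) * p ^+ 2 - 4 * p + 4 * s) / p ^+ 2)).
  by move=> s p s_gt0 p_gt0 sp; rewrite divr_gt0 ?exprn_gt0 ?alpha_slope_gt0.
move=> x y x_gt0 y_gt0; rewrite /alpha_t; field.
by rewrite !gt_eqF.
Qed.

Lemma beta_t_decreasing : {in Num.pos &, {homo beta_t : x y /~ x < y}}.
Proof.
apply: (homo_pos_of_neg_slope
  (q := fun s p => (p * (s ^+ 2 - p - s - 1) + 2) / p)).
  by move=> s p s_gt0 p_gt0 sp; rewrite divr_gt0 ?beta_slope_gt0.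
move=> x y x_gt0 y_gt0; rewrite /beta_t; field.
by rewrite !gt_eqF.
Qed.

Lemma gamma_t_increasing : {in Num.pos &, {homo gamma_t : x y / x < y}}.
Proof.
apply: (homo_pos_of_slope (q := fun s p => s * (s ^+ 2 - 2 * p) - s + 2)).
  exact: gamma_slope_gt0.
by move=> x y _ _; rewrite /gamma_t; ring.
Qed.

Lemma gamma_t_sub_alpha_t_increasing :
  {in Num.pos &, {homo (fun t => gamma_t t - alpha_t t) : x y / x < y}}.
Proof.
move=> x y x_pos y_pos lt_xy.
have := gamma_t_increasing x_pos y_pos lt_xy.
have := alpha_t_decreasing y_pos x_pos lt_xy.
lra.
Qed.

Lemma gamma_t_sub_alpha_t_sub_beta_t_increasing :
  {in Num.pos &,
    {homo (fun t => gamma_t t - alpha_t t - 2 * beta_t t) : x y / x < y}}.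
Proof.
move=> x y x_pos y_pos lt_xy.
have := gamma_t_sub_alpha_t_increasing x_pos y_pos lt_xy.
have := beta_t_decreasing y_pos x_pos lt_xy.
lra.
Qed.

(* gamma_t - alpha_t + 2 beta_t + 7 = (t^4 - 2t^3 + 2t^2) + (2t + 8/t - 4/t^2) is a sum
   of two increasing functions; q is the sum of their slopes. *)
Lemma gamma_t_sub_alpha_t_add_beta_t_increasing :
  {in Num.pos &,
    {homo (fun t => gamma_t t - alpha_t t + 2 * beta_t t) : x y / x < y}}.
Proof.
apply: (homo_pos_of_slope (q := fun s p =>
  (s ^+ 3 - 2 * s ^+ 2 + 2 * s - 2 * p * (s - 1))
  + 2 * (p ^+ 2 - 4 * p + 2 * s) / p ^+ 2)).
  move=> s p s_gt0 p_gt0 sp.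
  by rewrite addr_gt0 ?quartic_slope_gt0 // divr_gt0 ?exprn_gt0
    ?mulr_gt0 ?hyperbolic_slope_gt0.
move=> x y x_gt0 y_gt0; rewrite /gamma_t /alpha_t /beta_t; field.
by rewrite !gt_eqF.
Qed.

Lemma alpha_t1 : alpha_t 1 = 1. Proof. by rewrite /alpha_t; field. Qed.
Lemma beta_t1 : beta_t 1 = 0. Proof. by rewrite /beta_t; field. Qed.
Lemma gamma_t1 : gamma_t 1 = 1. Proof. by rewrite /gamma_t; ring. Qed.

Lemma alpha_t_add_gamma_t_gt2 t : 0 < t -> t != 1 -> 2 < alpha_t t + gamma_t t.
Proof.
move=> t_gt0 t_neq1.
have -> : alpha_t t + gamma_t t
    = 2 + (t - 1) ^+ 2 * (t ^+ 4 + 2 * t ^+ 3 + t ^+ 2 + 4 * t + 4) / t ^+ 2.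
  by rewrite /alpha_t /gamma_t; field; rewrite gt_eqF.
rewrite ltrDl divr_gt0 ?exprn_gt0 // mulr_gt0 ?exprn_even_gt0 ?subr_eq0 //.
by rewrite !addr_gt0 ?mulr_gt0 ?exprn_gt0.
Qed.

End Monotonicity.

Section Reparametrization.
Variable R : realFieldType.
Variable b : R.
Hypothesis b_gt0 : 0 < b.
Implicit Types (e : R) (f : R -> R).

Lemma tpar_gt0 e : - b < e -> 0 < tpar b e.
Proof. by move=> lt_be; rewrite divr_gt0 //; lra. Qed.

Lemma ltr_tpar : {mono tpar b : e1 e2 / e1 < e2}.
Proof. by move=> e1 e2; rewrite /tpar ltr_pM2r ?invr_gt0 // ltrD2l. Qed.

Lemma tpar_eq1 e : (tpar b e == 1) = (e == 0).
Proof.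
by rewrite /tpar -(inj_eq (mulIf (lt0r_neq0 b_gt0))) divfK ?lt0r_neq0 // mul1r
  -subr_eq0 addrAC subrr add0r.
Qed.

Lemma strictly_increasing_on_tpar f :
  {in Num.pos &, {homo f : x y / x < y}} -> strictly_increasing_on b (f \o tpar b).
Proof.
by move=> f_incr e1 e2 lt_be1 lt_e12; rewrite /= f_incr ?posrE ?ltr_tpar ?tpar_gt0 //;
  apply: lt_trans lt_e12.
Qed.

Lemma strictly_decreasing_on_tpar f :
  {in Num.pos &, {homo f : x y /~ x < y}} -> strictly_decreasing_on b (f \o tpar b).
Proof.
by move=> f_decr e1 e2 lt_be1 lt_e12; rewrite /= f_decr ?posrE ?ltr_tpar ?tpar_gt0 //;
  apply: lt_trans lt_e12.
Qed.

End Reparametrization.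

Theorem lemma7 (R : realFieldType) (b : R) (hb : 0 < b) :
  strictly_decreasing_on b (alpha b) /\
  strictly_decreasing_on b (beta b) /\
  strictly_increasing_on b (gamma b) /\
  strictly_increasing_on b (fun e => gamma b e - alpha b e - 2 * beta b e) /\
  strictly_increasing_on b (fun e => gamma b e - alpha b e + 2 * beta b e) /\
  strictly_increasing_on b (fun e => gamma b e - alpha b e) /\
  (forall e : R, - b < e -> e != 0 ->
     alpha b 0 + gamma b 0 < alpha b e + gamma b e) /\
  alpha b 0 = 1 /\ gamma b 0 = 1 /\ beta b 0 = 0.
Proof.
have tpar0 : tpar b 0 = 1 by apply/eqP; rewrite tpar_eq1.
split; first exact (strictly_decreasing_on_tpar hb (@alpha_t_decreasing R)).
split; first exact (strictly_decreasing_on_tpar hb (@beta_t_decreasing R)).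
split; first exact (strictly_increasing_on_tpar hb (@gamma_t_increasing R)).
split.
  exact (strictly_increasing_on_tpar hb (@gamma_t_sub_alpha_t_sub_beta_t_increasing R)).
split.
  exact (strictly_increasing_on_tpar hb (@gamma_t_sub_alpha_t_add_beta_t_increasing R)).
split; first exact (strictly_increasing_on_tpar hb (@gamma_t_sub_alpha_t_increasing R)).
rewrite /alpha /beta /gamma tpar0 -/(alpha_t 1) -/(beta_t 1) -/(gamma_t 1).
rewrite alpha_t1 beta_t1 gamma_t1; split=> // e lt_be e_neq0.
by apply: alpha_t_add_gamma_t_gt2; rewrite ?tpar_gt0 ?tpar_eq1.
Qed.
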